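(* A graph $G$ is a cograph if and only if $G$ can be explained by a weak labeled level-1 network $(N,t)$.
   Context: Graphs are finite, simple, undirected; a cograph is a graph with no induced $P_4$. Network on finite $X$: a DAG $N=(V,E)$ with either $V=X=\{x\}$, or (N1) unique root $\rho_N$ of indegree 0, outdegree $\ge2$; (N2) $x\in X$ iff outdegree 0, indegree 1; (N3) every other non-root vertex has indegree 1 and outdegree $\ge2$, or indegree 2 (hybrid-vertex) and outdegree $\ge1$. Level-1: every biconnected component of the underlying undirected graph contains at most one hybrid-vertex; then $\mathrm{lca}_N(x,y)$ (the $\preceq$-minimal common ancestor) is unique. Labeled network $(N,t)$: $t:V\to\{0,1,\odot\}$ with $t(v)=\odot$ iff $v\in X$; it explains $G$ if $G$ is isomorphic to the graph on $X$ with $x\ne y$ adjacent iff $t(\mathrm{lca}_N(x,y))=1$. A cycle of a level-1 network is a biconnected component that is not a single vertex or edge; it is the union of two directed paths (sides) from its root $\rho_C$ to its hybrid-vertex $\eta_C$, internally vertex-disjoint. A cycle is weak if one side consists of $\rho_C,\eta_C$ only, or both sides contain exactly one vertex distinct from $\rho_C,\eta_C$. A network is weak if all its cycles are weak (trees are weak). *)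

From mathcomp Require Import all_boot.
Set Implicit Arguments. Unset Strict Implicit. Unset Printing Implicit Defensive.

Definition simple_graph (T : finType) (g : rel T) : Prop :=
  symmetric g /\ irreflexive g.

Definition has_induced_P4 (T : finType) (g : rel T) : Prop :=
  exists a b c d : T,
    uniq [:: a; b; c; d] /\
    g a b /\ g b c /\ g c d /\ ~~ g a c /\ ~~ g b d /\ ~~ g a d.

Definition cograph (T : finType) (g : rel T) : Prop := ~ has_induced_P4 g.

Section Net.
Variables (V : finType) (E : rel V).   (* E u v : arc u -> v *)

Definition indeg (v : V) : nat := #|[pred u | E u v]|.
Definition outdeg (v : V) : nat := #|[pred u | E v u]|.

Definition acyclic : Prop := forall u v, E u v -> ~~ connect E v u.

(* Network axioms: either a single vertex (which is the unique leaf), or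
   (N1) unique root of indegree 0 and outdegree >= 2,
   (N2) leaves: outdegree 0 and indegree 1,
   (N3) other vertices: tree vertices (in 1, out >= 2) or hybrids (in 2, out >= 1). *)
Definition is_network : Prop :=
  acyclic /\
  ((#|V| = 1 /\ forall u v, ~~ E u v) \/
   ((exists! r, indeg r = 0) /\
    (forall r, indeg r = 0 -> 2 <= outdeg r) /\
    (forall v, indeg v = 0 \/ (outdeg v = 0 /\ indeg v = 1)
               \/ (indeg v = 1 /\ 2 <= outdeg v)
               \/ (indeg v = 2 /\ 1 <= outdeg v)))).

Definition is_leaf (v : V) : bool := outdeg v == 0.
Definition is_hybrid (v : V) : bool := indeg v == 2.

Definition und (u v : V) : bool := E u v || E v u.
Definition und_in (S : {set V}) : rel V :=
  fun u v => [&& u \in S, v \in S & und u v].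

(* the subgraph induced by S is connected (empty counts as connected) *)
Definition conn_in (S : {set V}) : Prop :=
  forall u v, u \in S -> v \in S -> connect (und_in S) u v.

(* biconnected: connected and remains connected after deleting any vertex
   (so single vertices and single edges are biconnected) *)
Definition biconnected (S : {set V}) : Prop :=
  conn_in S /\ forall w, w \in S -> conn_in (S :\ w).

(* biconnected component (block): inclusion-maximal biconnected vertex set
   (blocks are induced subgraphs) *)
Definition is_block (S : {set V}) : Prop :=
  biconnected S /\ forall S' : {set V}, S \subset S' -> biconnected S' -> S' = S.

Definition level1 : Prop :=
  forall S : {set V}, is_block S -> #|[set v in S | is_hybrid v]| <= 1.

Definition is_cycle (S : {set V}) : Prop := is_block S /\ 3 <= #|S|.

(* C is the union of two internally vertex-disjoint directed paths (sides)
   r -> q1 -> h and r -> q2 -> h (q1, q2 the interior vertices), and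
   one side is just r,h or both sides have exactly one interior vertex. *)
Definition weak_cycle (S : {set V}) : Prop :=
  exists (r h : V) (q1 q2 : seq V),
    path E r (rcons q1 h) /\ path E r (rcons q2 h) /\
    uniq (r :: h :: q1 ++ q2) /\
    S = [set x | x \in r :: h :: q1 ++ q2] /\
    (q1 = [::] \/ q2 = [::] \/ (size q1 = 1 /\ size q2 = 1)).

Definition weak_network : Prop := forall S : {set V}, is_cycle S -> weak_cycle S.

(* lca: a ⪯-minimal common ancestor (u ancestor of v iff connect E u v) *)
Definition is_lca (x y w : V) : Prop :=
  connect E w x /\ connect E w y /\
  forall w', connect E w' x -> connect E w' y -> connect E w w' -> w' = w.

End Net.

Inductive label := L0 | L1 | Lodot.

(* (N,t) is a labeled level-1 weak network explaining g, N having n vertices;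
   f : T -> 'I_n is a bijection from the vertices of G onto the leaf set X. *)
Definition explained_by_weak_level1 (T : finType) (g : rel T) : Prop :=
  exists (n : nat) (E : rel 'I_n) (t : 'I_n -> label) (f : T -> 'I_n),
    is_network E /\ level1 E /\ weak_network E /\
    (forall v, t v = Lodot <-> is_leaf E v) /\
    injective f /\ (forall v, is_leaf E v -> exists a, f a = v) /\
    (forall a, is_leaf E (f a)) /\
    (forall a b, a != b ->
       (g a b <-> exists w, is_lca E (f a) (f b) w /\ t w = L1)).

(* A cograph is explained by its cotree: by Seinsche's theorem every induced subgraph on
   at least two vertices is the join or the disjoint union of two smaller ones, and the
   resulting binary tree, labelled 1 at joins and 0 at unions, is a network without
   hybrids, hence weak and level-1.
   Conversely, let a weak level-1 network explain a graph with an induced P4 and let [v] be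
   a lowest common ancestor of its four leaves.  Two children of [v] with a common
   descendant span a cycle whose hybrid is their first meet, and no child of [v] shares
   descendants with two others.  If the four leaves lie below different such groups of
   children, [v] is the lca of every pair across the groups; otherwise they lie below the
   two children [c1], [c2] of one weak cycle, which are then both parents of its hybrid,
   and the lca of two leaves is [v], [c1] or [c2] according to which of [c1], [c2] lie
   above them.  Either way the leaves fall into at most three classes, not all singletons,
   that are modules of the P4, which is impossible. *)

From mathcomp Require Import all_boot zify.
From Stdlib Require Import Classical.
Set Implicit Arguments. Unset Strict Implicit. Unset Printing Implicit Defensive.

(** * Acyclic digraphs and their blocks *)

Section MinimalElements.
Variables (V : finType) (le : rel V).
Hypotheses (le_refl : reflexive le) (le_trans : transitive le).
Hypothesis le_anti : antisymmetric le.

(* Minimise the number of elements above [w]: a strictly bigger [w'] has strictly fewer. *)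
Lemma ex_minimal_above (Q : pred V) w0 : Q w0 ->
  exists w, [/\ Q w, le w0 w & forall w', Q w' -> le w w' -> w' = w].
Proof.
move=> Qw0; pose up w := [set y | le w y].
have P0 : Q w0 && le w0 w0 by rewrite Qw0 le_refl.
case: (@arg_minnP _ w0 (fun w => Q w && le w0 w) (fun w => #|up w|) P0) => w /andP [Qw w0w] wmin.
exists w; split => // w' Qw' ww'.
have up_sub : up w' \subset up w.
  by apply/subsetP => y; rewrite !inE; apply: le_trans.
have /(_ w') := wmin; rewrite Qw' (le_trans w0w ww') => /(_ isT) up_le.
have /eqP up_eq : up w' == up w.
  by rewrite eqEcard up_sub.
have : w \in up w' by rewrite up_eq inE le_refl.
by rewrite inE => w'w; apply: le_anti; rewrite w'w.
Qed.

End MinimalElements.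

Section Paths.
Variables (V : finType) (E : rel V).

Lemma connect_first_edge x y : connect E x y -> x != y ->
  exists2 c, E x c & connect E c y.
Proof.
move=> /connectP [[|c p] /= xp ->]; first by rewrite eqxx.
by case/andP: xp => Exc cp _; exists c => //; apply/connectP; exists p.
Qed.

Lemma connect_last_edge x y : connect E x y -> x != y ->
  exists2 c, connect E x c & E c y.
Proof.
move=> /connectP [p + ->]; elim/last_ind: p => [|p c _]; first by rewrite /= eqxx.
rewrite rcons_path last_rcons => /andP [xp Ec] _.
by exists (last x p) => //; apply/connectP; exists p.
Qed.

Lemma path_connect_last x p t : path E x p -> t \in x :: p -> connect E t (last x p).
Proof.
elim: p x t => [|y p IH] x t /=; first by rewrite inE => _ /eqP ->.
case/andP => Exy yp; rewrite inE => /orP [/eqP ->|tp]; last exact: IH.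
exact: connect_trans (connect1 Exy) (IH y y yp (mem_head _ _)).
Qed.

Lemma und_in_sym (S : {set V}) : symmetric (und_in E S).
Proof. by move=> x y; rewrite /und_in /und andbCA orbC. Qed.

Lemma und_in_connect_sym (S : {set V}) : connect_sym (und_in E S).
Proof. exact/sym_connect_sym/und_in_sym. Qed.

Lemma und_in_connect_interval (S : {set V}) x y : connect E x y ->
  (forall t, connect E x t -> connect E t y -> t \in S) -> connect (und_in E S) x y.
Proof.
move=> /connectP [p xp ->] inS.
have allS : all [in S] (x :: p).
  by apply/allP => t tp; apply: inS; [exact: (path_connect xp) | exact: path_connect_last].
apply/connectP; exists p => //; apply: sub_in_path allS xp => u w uS wS Euw.
by rewrite /und_in uS wS /und Euw.
Qed.

Lemma und_in_connect_edge (S : {set V}) x y : x \in S -> y \in S -> E x y ->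
  connect (und_in E S) x y.
Proof. by move=> xS yS Exy; apply: connect1; rewrite /und_in xS yS /und Exy. Qed.

Lemma und_in_connect_child (S : {set V}) u c y : E u c -> u \in S -> connect E c y ->
  (forall t, connect E c t -> connect E t y -> t \in S) -> connect (und_in E S) u y.
Proof.
move=> Euc uS cy inS; apply: connect_trans (und_in_connect_interval cy inS).
by apply: und_in_connect_edge => //; apply: inS.
Qed.

Lemma und_in_connect_mono (S S' : {set V}) x y : S \subset S' ->
  connect (und_in E S) x y -> connect (und_in E S') x y.
Proof.
move=> sSS'; apply: connect_sub => u w /and3P [uS wS uw]; apply: connect1.
by rewrite /und_in (subsetP sSS' _ uS) (subsetP sSS' _ wS).
Qed.

Lemma conn_in_hub (A : {set V}) h : h \in A ->
  (forall y, y \in A -> connect (und_in E A) h y) -> conn_in E A.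
Proof.
move=> hA hy x y xA yA; apply: connect_trans (hy y yA).
by rewrite und_in_connect_sym; apply: hy.
Qed.

Lemma conn_inU (A B : {set V}) c : conn_in E A -> conn_in E B -> c \in A -> c \in B ->
  conn_in E (A :|: B).
Proof.
move=> connA connB cA cB; apply: (conn_in_hub (h := c)) => [|y]; first by rewrite inE cA.
rewrite inE => /orP [yA|yB].
- exact: und_in_connect_mono (subsetUl A B) (connA _ _ cA yA).
- exact: und_in_connect_mono (subsetUr A B) (connB _ _ cB yB).
Qed.

Lemma biconnected_conn_inD1 (A : {set V}) w : biconnected E A -> conn_in E (A :\ w).
Proof.
case=> connA connAw; case: (boolP (w \in A)) => [|wA]; first exact: connAw.
have -> // : A :\ w = A.
by apply/setP => x; rewrite !inE; case: eqP => // ->; rewrite (negbTE wA).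
Qed.

(* Two biconnected sets sharing two vertices still share one after deleting any vertex. *)
Lemma biconnectedU (A B : {set V}) c d : biconnected E A -> biconnected E B ->
  c != d -> c \in A -> d \in A -> c \in B -> d \in B -> biconnected E (A :|: B).
Proof.
move=> bA bB cd cA dA cB dB; split; first exact: conn_inU (proj1 bA) (proj1 bB) cA cB.
move=> w _; rewrite setDUl.
have [e [eA eB ew]] : exists e, [/\ e \in A, e \in B & e != w].
  case: (eqVneq c w) => [cw|]; last by exists c.
  by exists d; rewrite -cw eq_sym.
by apply: (conn_inU (c := e)); rewrite ?inE ?eA ?eB ?ew //; apply: biconnected_conn_inD1.
Qed.

Lemma biconnected_sub_block (S : {set V}) : biconnected E S ->
  exists B, is_block E B /\ S \subset B.
Proof.
have [n] := ubnP (#|V| - #|S|); elim: n S => // n IH S ltn bS.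
case: (classic (exists S' : {set V}, [/\ S \subset S', biconnected E S' & S' <> S]))
  => [[S' [sSS' bS' S'S]]|nobig].
- have ltSS' : #|S| < #|S'|.
    by apply/proper_card; rewrite properEneq sSS' andbT; apply/eqP => eSS'; apply: S'S.
  have [B [blockB sS'B]] : exists B, is_block E B /\ S' \subset B.
    by apply: IH bS'; have := max_card S'; lia.
  by exists B; split => //; apply: subset_trans sSS' sS'B.
- exists S; split => //; split => // S' sSS' bS'.
  by apply: NNPP => S'S; apply: nobig; exists S'.
Qed.

End Paths.

Section Acyclic.
Variables (V : finType) (E : rel V).
Hypothesis E_acyclic : acyclic E.

Lemma acyclic_irr : irreflexive E.
Proof. by move=> u; apply/negP => Euu; move: (E_acyclic Euu); rewrite connect0. Qed.

Lemma edge_neq x y : E x y -> x != y.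
Proof. by move=> Exy; apply/eqP => exy; move: Exy; rewrite exy acyclic_irr. Qed.

Lemma connect_anti : antisymmetric (connect E).
Proof.
move=> x y /andP [xy yx]; apply/eqP/negPn/negP => /(connect_first_edge xy) [c Exc cy].
by move: (E_acyclic Exc); rewrite (connect_trans cy yx).
Qed.

Lemma ex_minimal_desc (Q : pred V) w0 : Q w0 ->
  exists w, [/\ Q w, connect E w0 w & forall w', Q w' -> connect E w w' -> w' = w].
Proof.
exact: (@ex_minimal_above _ (connect E) (@connect0 _ E) (@connect_trans _ E) connect_anti).
Qed.

Lemma ex_maximal_anc (Q : pred V) y0 : Q y0 ->
  exists z, [/\ Q z, connect E z y0 & forall y, Q y -> connect E y z -> y = z].
Proof.
have anti : antisymmetric (fun x y => connect E y x).
  by move=> x y /andP [xy yx]; apply: connect_anti; rewrite xy yx.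
have refl : reflexive (fun x y => connect E y x) by move=> x; apply: connect0.
have trans : transitive (fun x y => connect E y x).
  by move=> y x z xy yz; apply: connect_trans yz xy.
exact: (@ex_minimal_above _ _ refl trans anti).
Qed.

(* In a forest no block has three vertices: a lowest vertex [u] of the block is adjacent
   only to its parent, so deleting the parent (or, if there is none, any other vertex)
   isolates [u]. *)
Lemma indeg_le1_no_cycle (S : {set V}) : (forall v, indeg E v <= 1) -> ~ is_cycle E S.
Proof.
move=> indeg_le1 [[[_ delS] _] S3].
have [u0 u0S] : exists u, u \in S by apply/card_gt0P; apply: leq_trans S3.
have [u [uS _ umin]] := ex_minimal_desc (Q := [in S]) u0S.
have nbr w : und_in E S u w -> E w u.
  case/and3P => _ wS /orP [Euw|//]; move: (Euw).
  by rewrite (umin w wS (connect1 Euw)) acyclic_irr.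
have [p [pS pu only_p]] : exists p, [/\ p \in S, p != u & forall w, und_in E S u w -> w = p].
  have [/existsP [w uw]|nonbr] := boolP [exists w, und_in E S u w].
    exists w; split; first by case/and3P: uw.
      by rewrite (edge_neq (nbr w uw)).
    move=> w' uw'; have /card_le1_eqP := indeg_le1 u.
    by apply; rewrite inE nbr.
  have [p pS pu] : exists2 p, p \in S & p != u.
    have /card_gt0P [p] : 0 < #|S :\ u| by move: S3; rewrite (cardsD1 u S) uS add1n ltnS => /ltnW.
    by rewrite !inE => /andP [pu pS]; exists p.
  by exists p; split => // w uw; move/negP: nonbr; case; apply/existsP; exists w.
have [y [yS yu yp]] : exists y, [/\ y \in S, y != u & y != p].
  have /card_gt0P [y] : 0 < #|(S :\ u) :\ p|.
    by move: S3; rewrite (cardsD1 u S) (cardsD1 p (S :\ u)) uS !inE pu pS; lia.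
  by rewrite !inE => /and3P [yp yu yS]; exists y.
have := delS p pS u y; rewrite !inE eq_sym pu uS yp yS => /(_ isT isT) /connectP [[|w q] /= + uy].
  by rewrite uy eqxx in yu.
case/andP => /and3P [_ wSp uw] _; move: wSp; rewrite !inE => /andP [wp wS].
by move: wp; rewrite (only_p w) ?eqxx // /und_in uS wS.
Qed.

End Acyclic.

Lemma level1_block_hybrid_eq (V : finType) (E : rel V) B x y : level1 E -> is_block E B ->
  x \in B -> y \in B -> is_hybrid E x -> is_hybrid E y -> x = y.
Proof.
move=> lev blockB xB yB hx hy; have /card_le1_eqP := lev _ blockB.
by apply; rewrite inE ?xB ?yB ?hx ?hy.
Qed.

(** * Cycles of level-1 networks *)

Section SeqSuccessor.
Variable T : eqType.

Lemma last_eq_head (x : T) s : x \notin s -> last x s = x -> s = [::].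
Proof. by case: s => //= a s xs sx; move: xs; rewrite -sx mem_last. Qed.

Lemma uniq_succ_eq (s l1 l2 m1 m2 : seq T) x c c' : uniq s ->
  s = l1 ++ x :: c :: l2 -> s = m1 ++ x :: c' :: m2 -> c = c'.
Proof.
have index_at l l' : uniq (l ++ x :: l') -> index x (l ++ x :: l') = size l.
  rewrite cat_uniq /= => /and4P [_ /norP [xl _] _ _].
  by rewrite index_cat (negbTE xl) /= eqxx addn0.
move=> us defl defm.
have il : index x s = size l1 by rewrite defl index_at -?defl.
have im : index x s = size m1 by rewrite defm index_at -?defm.
have dl : drop (index x s) s = x :: c :: l2 by rewrite il {1}defl drop_size_cat.
have dm : drop (index x s) s = x :: c' :: m2 by rewrite im {1}defm drop_size_cat.
by move: dl; rewrite dm => -[].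
Qed.

Lemma uniq_two_sides (r z : T) q1 q2 : uniq (r :: z :: q1 ++ q2) ->
  [/\ uniq (r :: q1), uniq (r :: q2) & forall x, x \in q1 -> x \notin q2].
Proof.
rewrite /= !inE !mem_cat !negb_or cat_uniq.
move=> /andP [/and3P [_ rq1 rq2] /andP [_ /and3P [uq1 nq uq2]]].
split; rewrite ?rq1 ?uq1 ?rq2 ?uq2 // => x xq1.
by apply: contra nq => xq2; apply/hasP; exists x.
Qed.

Lemma path_parent_eq (e : rel T) r q z v c1 c2 : path e r (rcons q z) -> uniq (r :: q) ->
  c1 \in q -> c2 \in q -> (forall y, e y c1 -> y = v) -> (forall y, e y c2 -> y = v) ->
  c1 = c2.
Proof.
move=> pq uq.
have split_at c : c \in q -> (forall y, e y c -> y = v) ->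
    exists s1 s2, r :: q = s1 ++ v :: c :: s2.
  move=> cq par; move: pq; case/splitPr: cq => l1 l2.
  rewrite rcons_cat cat_path /= => /and3P [_ Ec _].
  by exists (belast r l1), l2; rewrite -(par _ Ec) -cat_cons lastI cat_rcons.
move=> c1q c2q par1 par2.
have [s1 [s2 def1]] := split_at c1 c1q par1.
have [t1 [t2 def2]] := split_at c2 c2q par2.
exact: uniq_succ_eq uq def1 def2.
Qed.

End SeqSuccessor.

Section Forks.
Variables (V : finType) (E : rel V).
Hypothesis E_acyclic : acyclic E.
Hypothesis indeg_le2 : forall v, indeg E v <= 2.
Hypothesis E_level1 : level1 E.

Definition first_meet (c1 c2 z : V) :=
  [/\ connect E c1 z, connect E c2 z &
      forall y, connect E c1 y -> connect E c2 y -> connect E y z -> y = z].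

(* The vertices of a fork lie on one cycle of the network, whose root is [u] and
   whose hybrid is [z]. *)
Definition fork (u c1 c2 z : V) := [/\ E u c1, E u c2, c1 != c2 & first_meet c1 c2 z].

Definition fork_set (u c1 c2 z : V) : {set V} :=
  [set y | (y == u) || ((connect E c1 y || connect E c2 y) && connect E y z)].

Lemma first_meetC c1 c2 z : first_meet c1 c2 z -> first_meet c2 c1 z.
Proof. by case=> c1z c2z zmin; split => // y y2 y1; apply: zmin. Qed.

Lemma forkC u c1 c2 z : fork u c1 c2 z -> fork u c2 c1 z.
Proof. by case=> Eu1 Eu2 c12 meet; split; rewrite 1?eq_sym //; apply: first_meetC. Qed.

Lemma ex_first_meet c1 c2 y : connect E c1 y -> connect E c2 y ->
  exists2 z, first_meet c1 c2 z & connect E z y.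
Proof.
move=> c1y c2y.
have [z [/andP [c1z c2z] zy zmax]] :=
  ex_maximal_anc E_acyclic (Q := fun t => connect E c1 t && connect E c2 t)
    (introT andP (conj c1y c2y)).
by exists z => //; split => // t c1t c2t; apply: zmax; rewrite c1t.
Qed.

Lemma mem_fork_set_root u c1 c2 z : u \in fork_set u c1 c2 z.
Proof. by rewrite inE eqxx. Qed.

Lemma mem_fork_set1 u c1 c2 z y : connect E c1 y -> connect E y z -> y \in fork_set u c1 c2 z.
Proof. by move=> c1y yz; rewrite inE c1y yz orbT. Qed.

Lemma mem_fork_set2 u c1 c2 z y : connect E c2 y -> connect E y z -> y \in fork_set u c1 c2 z.
Proof. by move=> c2y yz; rewrite inE c2y yz !orbT. Qed.

Lemma mem_fork_set_meet u c1 c2 z : first_meet c1 c2 z -> z \in fork_set u c1 c2 z.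
Proof. by case=> c1z _ _; apply: mem_fork_set1 c1z (connect0 _ _). Qed.

Section ForkSet.
Variables (u c1 c2 z : V).
Hypotheses (Eu1 : E u c1) (Eu2 : E u c2) (meet : first_meet c1 c2 z).

Let S := fork_set u c1 c2 z.

Let child_not_root c t : E u c -> connect E c t -> t != u.
Proof. by move=> Euc ct; apply/eqP => tu; move: (E_acyclic Euc); rewrite -tu ct. Qed.

Let side y : y \in S -> y != u -> exists c, [/\ E u c, connect E c y, connect E y z &
  forall t, connect E c t -> connect E t z -> t \in S].
Proof.
rewrite inE => /orP [/eqP ->|/andP [/orP [cy|cy] yz] _]; first by rewrite eqxx.
- by exists c1; split => // t; apply: mem_fork_set1.
- by exists c2; split => // t; apply: mem_fork_set2.
Qed.

Lemma fork_set_conn_in : conn_in E S.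
Proof.
apply: (conn_in_hub (h := u)) => [|y yS]; first exact: mem_fork_set_root.
case: (eqVneq y u) => [->|yu]; first exact: connect0.
have [c [Euc cy yz inS]] := side yS yu.
apply: und_in_connect_child Euc (mem_fork_set_root _ _ _ _) cy _ => t ct ty.
exact: inS ct (connect_trans ty yz).
Qed.

Lemma fork_set_conn_inD1_root : conn_in E (S :\ u).
Proof.
have [c1z _ _] := meet.
have zS : z \in S :\ u by rewrite in_setD1 (child_not_root Eu1 c1z) mem_fork_set_meet.
apply: (conn_in_hub zS) => y; rewrite in_setD1 => /andP [yu yS].
have [c [Euc cy yz inS]] := side yS yu.
rewrite und_in_connect_sym; apply: und_in_connect_interval yz _ => t yt tz.
have ct := connect_trans cy yt.
by rewrite in_setD1 (child_not_root Euc ct) inS.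
Qed.

(* If [w] lies above [y], the path from [y] down to [z] avoids [w], and so does the
   side of the fork not passing through [w]. *)
Lemma fork_set_conn_inD1 w : w \in S -> w != u -> conn_in E (S :\ w).
Proof.
move=> wS wu; have [c1z c2z zmin] := meet.
have uSw : u \in S :\ w by rewrite in_setD1 eq_sym wu mem_fork_set_root.
apply: (conn_in_hub uSw) => y; rewrite in_setD1 => /andP [yw yS].
case: (eqVneq y u) => [->|yu]; first exact: connect0.
have [c [Euc cy yz inS]] := side yS yu.
have [wy|nwy] := boolP (connect E w y); last first.
  apply: und_in_connect_child Euc uSw cy _ => t ct ty.
  rewrite in_setD1 inS ?(connect_trans ty yz) // andbT.
  by apply: contraNneq nwy => <-.
have yz_avoid : connect (und_in E (S :\ w)) y z.
  apply: und_in_connect_interval yz _ => t yt tz.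
  rewrite in_setD1 inS ?(connect_trans cy yt) // andbT.
  apply: contra_neq yw => tw; rewrite tw in yt.
  by apply: (connect_anti E_acyclic); rewrite yt wy.
have wz : w != z.
  apply: contra_neq yw => wz; rewrite -wz in yz.
  by apply: (connect_anti E_acyclic); rewrite yz wy.
have [c' [Euc' c'z nc'w inS']] : exists c', [/\ E u c', connect E c' z, ~~ connect E c' w &
    forall t, connect E c' t -> connect E t z -> t \in S].
  have [c1w|nc1w] := boolP (connect E c1 w); last first.
    by exists c1; split => // t; apply: mem_fork_set1.
  exists c2; split => //; last by move=> t; apply: mem_fork_set2.
  apply: contraNN wz => c2w; apply/eqP; apply: zmin => //.
  exact: connect_trans wy yz.
have uz_avoid : connect (und_in E (S :\ w)) u z.
  apply: und_in_connect_child Euc' uSw c'z _ => t c't tz.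
  rewrite in_setD1 inS' // andbT.
  by apply: contraNneq nc'w => <-.
by apply: connect_trans uz_avoid _; rewrite und_in_connect_sym.
Qed.

Lemma fork_set_biconnected : biconnected E S.
Proof.
split => [|w wS]; first exact: fork_set_conn_in.
by case: (eqVneq w u) => [->|wu]; [exact: fork_set_conn_inD1_root | exact: fork_set_conn_inD1].
Qed.

End ForkSet.

Lemma fork_biconnected u c1 c2 z : fork u c1 c2 z -> biconnected E (fork_set u c1 c2 z).
Proof. by case=> Eu1 Eu2 _; apply: fork_set_biconnected. Qed.

Lemma indeg_ge z (s : seq V) : uniq s -> all (E^~ z) s -> size s <= indeg E z.
Proof.
move=> us parents; rewrite /indeg -(card_uniqP us); apply: subset_leq_card.
by apply/subsetP => y ys; rewrite inE (allP parents).
Qed.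

Lemma hybrid_of_parents x y z : E x z -> E y z -> x != y -> is_hybrid E z.
Proof.
move=> Exz Eyz xy; rewrite /is_hybrid eqn_leq indeg_le2 /=.
by have := @indeg_ge z [:: x; y]; rewrite /= inE xy Exz Eyz; apply.
Qed.

Lemma no_three_parents x y w z : E x z -> E y z -> E w z ->
  x != y -> x != w -> y != w -> False.
Proof.
move=> Exz Eyz Ewz xy xw yw.
have := @indeg_ge z [:: x; y; w]; rewrite /= !inE !negb_or xy xw yw Exz Eyz Ewz.
by have := indeg_le2 z; move=> le2 /(_ isT isT); lia.
Qed.

Lemma meet_parent u c z : E u c -> connect E c z ->
  exists2 y, E y z & (y = u /\ c = z) \/ connect E c y.
Proof.
move=> Euc cz; case: (eqVneq c z) => [<-|cz']; first by exists u; [|left].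
by have [y cy Eyz] := connect_last_edge cz cz'; exists y; [|right].
Qed.

Lemma meet_parents_neq u c1 c2 z y1 y2 : E u c1 -> E u c2 -> c1 != c2 ->
  first_meet c1 c2 z -> E y1 z -> (y1 = u /\ c1 = z) \/ connect E c1 y1 ->
  E y2 z -> (y2 = u /\ c2 = z) \/ connect E c2 y2 -> y1 != y2.
Proof.
move=> Eu1 Eu2 c12 [_ _ zmin] Ey1z side1 Ey2z side2; apply/eqP => y12; subst y2.
case: side1 side2 => [[y1u c1z]|c1y] [[y1u' c2z]|c2y].
- by rewrite c1z c2z eqxx in c12.
- by move: (E_acyclic Eu2); rewrite -y1u c2y.
- by move: (E_acyclic Eu1); rewrite -y1u' c1y.
- by move: (Ey1z); rewrite -(zmin y1 c1y c2y (connect1 Ey1z)) acyclic_irr.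
Qed.

Lemma fork_meet_hybrid u c1 c2 z : fork u c1 c2 z -> is_hybrid E z.
Proof.
case=> Eu1 Eu2 c12 meet; have [c1z c2z _] := meet.
have [y1 Ey1 side1] := meet_parent Eu1 c1z; have [y2 Ey2 side2] := meet_parent Eu2 c2z.
exact: hybrid_of_parents Ey1 Ey2 (meet_parents_neq Eu1 Eu2 c12 meet Ey1 side1 Ey2 side2).
Qed.

(* Two forks sharing two vertices lie in one block, whose unique hybrid is both meets. *)
Lemma forks_same_meet u c1 c2 z u' c1' c2' z' a b : fork u c1 c2 z -> fork u' c1' c2' z' ->
  a != b -> a \in fork_set u c1 c2 z -> b \in fork_set u c1 c2 z ->
  a \in fork_set u' c1' c2' z' -> b \in fork_set u' c1' c2' z' -> z = z'.
Proof.
move=> F F' ab a1 b1 a2 b2.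
have [B [blockB sub]] :=
  biconnected_sub_block (biconnectedU (fork_biconnected F) (fork_biconnected F') ab a1 b1 a2 b2).
have [_ _ _ meet] := F; have [_ _ _ meet'] := F'.
apply: (level1_block_hybrid_eq E_level1 blockB);
  rewrite ?(fork_meet_hybrid F) ?(fork_meet_hybrid F') //;
  apply: (subsetP sub); rewrite inE mem_fork_set_meet ?orbT //.
Qed.

Lemma fork_meet_below u c1 c2 h y : fork u c1 c2 h ->
  connect E c1 y -> connect E c2 y -> connect E h y.
Proof.
move=> F c1y c2y; have [z meet zy] := ex_first_meet c1y c2y.
have [Eu1 Eu2 c12 [c1h _ _]] := F; have [c1z _ _] := meet.
have F' : fork u c1 c2 z by [].
suff -> : h = z by [].
by apply: (forks_same_meet F F' (edge_neq E_acyclic Eu1));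
  rewrite ?mem_fork_set_root ?(mem_fork_set1 _ _ (connect0 _ _)).
Qed.

(* Below one side of a cycle nothing incomparable with its hybrid shares a descendant
   with it: the lowest common ancestor of the two would root a second cycle with the same
   hybrid, through a child of that ancestor that avoids the hybrid. *)
Lemma fork_side_comparable u c1 c2 h x p : fork u c1 c2 h -> connect E c1 x ->
  connect E x p -> connect E h p -> connect E h x || connect E x h.
Proof.
move=> F c1x xp hp; apply/norP => -[nhx nxh].
have [_ _ _ [c1h _ _]] := F.
have [u' [/andP [u'x u'h] c1u' u'min]] :=
  ex_minimal_desc E_acyclic (Q := fun t => connect E t x && connect E t h)
    (introT andP (conj c1x c1h)).
have u'x' : u' != x by apply: contraNneq nxh => <-.
have u'h' : u' != h by apply: contraNneq nhx => <-.
have [e1 Eu'e1 e1x] := connect_first_edge u'x u'x'.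
have [e2 Eu'e2 e2h] := connect_first_edge u'h u'h'.
have ne1h : ~~ connect E e1 h.
  apply/negP => e1h; move: (Eu'e1); rewrite -(u'min e1 _ (connect1 Eu'e1)) ?acyclic_irr //.
  by rewrite e1x.
have e12 : e1 != e2 by apply: contraNneq ne1h => ->.
have [h2 meet2 _] := ex_first_meet (connect_trans e1x xp) (connect_trans e2h hp).
have F2 : fork u' e1 e2 h2 by [].
have [_ e2h2 _] := meet2.
have h2h : h2 = h.
  apply: (forks_same_meet F2 F (edge_neq E_acyclic Eu'e2)).
  - exact: mem_fork_set_root.
  - exact: mem_fork_set2 (connect0 _ _) e2h2.
  - exact: mem_fork_set1 c1u' u'h.
  - exact: mem_fork_set1 (connect_trans c1u' (connect1 Eu'e2)) e2h.
by have [e1h2 _ _] := meet2; move: ne1h; rewrite -h2h e1h2.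
Qed.

Definition meets (x y : V) := [exists z, connect E x z && connect E y z].

Lemma meetsP x y : reflect (exists2 z, connect E x z & connect E y z) (meets x y).
Proof.
apply: (iffP existsP) => [[z /andP [xz yz]]|[z xz yz]]; first by exists z.
by exists z; rewrite xz yz.
Qed.

Lemma meetsC x y : meets x y = meets y x.
Proof. by apply/meetsP/meetsP => -[z xz yz]; exists z. Qed.

(* All three pairwise meets coincide, so the meet would have three distinct parents. *)
Lemma three_children v c1 c2 c3 : E v c1 -> E v c2 -> E v c3 ->
  c1 != c2 -> c1 != c3 -> c2 != c3 -> meets c1 c2 -> meets c1 c3 -> False.
Proof.
move=> Ev1 Ev2 Ev3 c12 c13 c23 /meetsP [y c1y c2y] /meetsP [y' c1y' c3y'].
have [h meet12 _] := ex_first_meet c1y c2y.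
have [h' meet13 _] := ex_first_meet c1y' c3y'.
have F12 : fork v c1 c2 h by []. have F13 : fork v c1 c3 h' by [].
have [c1h c2h _] := meet12; have [c1h' c3h' _] := meet13.
have h'h : h' = h.
  by apply: (forks_same_meet F13 F12 (edge_neq E_acyclic Ev1));
    rewrite ?mem_fork_set_root ?(mem_fork_set1 _ _ (connect0 _ _)).
subst h'.
have [h'' meet23 _] := ex_first_meet c2h c3h'.
have F23 : fork v c2 c3 h'' by [].
have [c2h'' _ _] := meet23.
have h''h : h'' = h.
  apply: (forks_same_meet F23 F12 (edge_neq E_acyclic Ev2)); try exact: mem_fork_set_root.
  - exact: mem_fork_set1 (connect0 _ _) c2h''.
  - exact: mem_fork_set2 (connect0 _ _) c2h.
subst h''.
have [y1 Ey1 side1] := meet_parent Ev1 c1h.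
have [y2 Ey2 side2] := meet_parent Ev2 c2h.
have [y3 Ey3 side3] := meet_parent Ev3 c3h'.
apply: (no_three_parents Ey1 Ey2 Ey3).
- exact: meet_parents_neq Ev1 Ev2 c12 meet12 Ey1 side1 Ey2 side2.
- exact: meet_parents_neq Ev1 Ev3 c13 meet13 Ey1 side1 Ey3 side3.
- exact: meet_parents_neq Ev2 Ev3 c23 meet23 Ey2 side2 Ey3 side3.
Qed.

Definition splits (w x y : V) :=
  [/\ connect E w x, connect E w y & forall c, E w c -> ~~ (connect E c x && connect E c y)].

Lemma splits_lca w x y : splits w x y -> is_lca E x y w.
Proof.
case=> wx wy nochild; split => //; split => // w' w'x w'y ww'.
apply/eqP; rewrite eq_sym; apply/negPn/negP => /(connect_first_edge ww') [c Ewc cw'].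
by move: (nochild c Ewc); rewrite (connect_trans cw' w'x) (connect_trans cw' w'y).
Qed.

Lemma splitsC w x y : splits w x y -> splits w y x.
Proof. by case=> wx wy nochild; split => // c /nochild; rewrite andbC. Qed.

(* A child [e] of [c1] above both leaves would be comparable with the meet [h]; it cannot
   be below [h], and above [h] it gives [h] a third parent. *)
Lemma fork_side_splits v c1 c2 h p q : fork v c1 c2 h -> E c1 h -> E c2 h ->
  connect E c1 p -> ~~ connect E c2 p -> connect E c1 q -> connect E c2 q -> splits c1 p q.
Proof.
move=> F E1h E2h c1p nc2p c1q c2q; split => // e E1e; apply/andP => -[ep eq].
have [_ _ c12 [_ _ hmin]] := F.
have hq := fork_meet_below F c1q c2q.
have c1e := connect1 E1e.
have nhe : ~~ connect E h e.
  by apply: contraNN nc2p => he; apply: connect_trans (connect1 E2h) (connect_trans he ep).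
move: (fork_side_comparable F c1e eq hq); rewrite (negbTE nhe) /= => eh.
have eh' : e != h by apply: contraNneq nhe => ->; apply: connect0.
have [y ey Eyh] := connect_last_edge eh eh'.
apply: (no_three_parents E1h E2h Eyh c12).
- by apply: contraNneq (E_acyclic E1e) => ->.
- apply: contraTneq (E2h) => y2; have c1c2 : connect E c1 c2 by rewrite y2 (connect_trans c1e ey).
  by rewrite (hmin c2 c1c2 (connect0 _ _) (connect1 E2h)) acyclic_irr.
Qed.

Section Rooted.
Hypothesis E_root : exists rho, forall v, connect E rho v.

(* Another lca [w] would be incomparable with [w0]; below their lowest common ancestor
   the two branches meet, and that meet is either below [w0] (giving a child of [w0]
   above [p] and [q]) or above it (impossible by [fork_side_comparable]). *)
Lemma splits_lca_unique w0 p q w : splits w0 p q -> is_lca E p q w -> w = w0.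
Proof.
move=> [w0p w0q nochild] [wp [wq wmin]]; apply/eqP/negPn/negP => ww0.
have not_below_child c t : E w0 c -> connect E c t -> connect E t p -> connect E t q -> False.
  move=> Ew0c ct tp tq; move: (nochild c Ew0c).
  by rewrite (connect_trans ct tp) (connect_trans ct tq).
have nw0w : ~~ connect E w0 w.
  apply/negP => w0w; rewrite eq_sym in ww0.
  by have [c Ew0c cw] := connect_first_edge w0w ww0; apply: not_below_child Ew0c cw wp wq.
have nww0 : ~~ connect E w w0 by apply: contra ww0 => /(wmin w0 w0p w0q) ->.
have [rho rho_anc] := E_root.
have [u [/andP [uw0 uw] _ umin]] :=
  ex_minimal_desc E_acyclic (Q := fun t => connect E t w0 && connect E t w)
    (introT andP (conj (rho_anc w0) (rho_anc w))).
have uw0' : u != w0 by apply: contraNneq nw0w => <-.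
have uw' : u != w by apply: contraNneq nww0 => <-.
have [c1 Euc1 c1w0] := connect_first_edge uw0 uw0'.
have [c2 Euc2 c2w] := connect_first_edge uw uw'.
have nc2w0 : ~~ connect E c2 w0.
  apply/negP => c2w0; move: (Euc2); rewrite (umin c2) ?acyclic_irr ?c2w0 //.
  exact: connect1.
have c12 : c1 != c2 by apply: contraNneq nc2w0 => <-.
have [h meet hp] := ex_first_meet (connect_trans c1w0 w0p) (connect_trans c2w wp).
have F : fork u c1 c2 h by [].
have hq := fork_meet_below F (connect_trans c1w0 w0q) (connect_trans c2w wq).
have [_ c2h _] := meet.
have [w0h|nw0h] := boolP (connect E w0 h).
  have w0h' : w0 != h by apply: contraNneq nc2w0 => ->.
  by have [s Ew0s sh] := connect_first_edge w0h w0h'; apply: not_below_child Ew0s sh hp hq.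
move: (fork_side_comparable F c1w0 w0p hp); rewrite (negbTE nw0h) orbF => hw0.
by move: nc2w0; rewrite (connect_trans c2h hw0).
Qed.

End Rooted.

Lemma block_nonhybrid_parent B h c v y : is_block E B -> h \in B -> is_hybrid E h ->
  c \in B -> c != h -> E v c -> E y c -> y = v.
Proof.
move=> blockB hB hyb_h cB ch Evc Eyc.
have c_nonhyb : ~~ is_hybrid E c.
  by apply: contra ch => hyb_c; rewrite (level1_block_hybrid_eq E_level1 blockB cB hB hyb_c hyb_h).
have /card_le1_eqP : indeg E c <= 1.
  by move: c_nonhyb (indeg_le2 c); rewrite /is_hybrid; lia.
by apply; rewrite inE.
Qed.

Lemma weak_cycle_hybrid r h0 q1 q2 : path E r (rcons q1 h0) -> path E r (rcons q2 h0) ->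
  uniq (r :: h0 :: q1 ++ q2) -> (q1 != [::]) || (q2 != [::]) -> is_hybrid E h0.
Proof.
rewrite !rcons_path => /andP [_ E1] /andP [_ E2] /uniq_two_sides [uq1 uq2 disj] nonempty.
have [rq1 rq2] : r \notin q1 /\ r \notin q2 by case/andP: uq1; case/andP: uq2.
apply: hybrid_of_parents E1 E2 _; apply/eqP => last12.
have [lr|lr] := eqVneq (last r q1) r.
  by move: nonempty; rewrite (last_eq_head rq1 lr) (last_eq_head rq2 (etrans (esym last12) lr)).
have mem_last_neq q : last r q != r -> last r q \in q.
  by have := mem_last r q; rewrite inE => /orP [/eqP ->|//]; rewrite eqxx.
by move: (disj _ (mem_last_neq q1 lr)); rewrite last12 mem_last_neq // -last12.
Qed.

Section Weak.
Hypothesis E_weak : weak_network E.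

(* The children [c1], [c2] of [v] have no parent other than [v]; on one side of the cycle
   they would both follow [v], so both sides have exactly one inner vertex. *)
Lemma weak_block_children B r h q1 q2 v c1 c2 : is_block E B -> is_hybrid E h ->
  path E r (rcons q1 h) -> path E r (rcons q2 h) -> uniq (r :: h :: q1 ++ q2) ->
  B = [set x | x \in r :: h :: q1 ++ q2] ->
  q1 = [::] \/ q2 = [::] \/ (size q1 = 1 /\ size q2 = 1) ->
  v \in B -> E v c1 -> E v c2 -> c1 != c2 -> c1 \in B -> c2 \in B -> c1 != h -> c2 != h ->
  E c1 h /\ E c2 h.
Proof.
move=> blockB hyb_h p1 p2 U defB shape vB Ev1 Ev2 c12 c1B c2B c1h c2h.
have [uq1 uq2 _] := uniq_two_sides U.
have memB x : (x \in B) = (x \in r :: h :: q1 ++ q2) by rewrite defB inE.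
have hB : h \in B by rewrite memB !inE eqxx orbT.
have rv : connect E r v.
  move: vB; rewrite memB !inE mem_cat => /or4P [/eqP ->|/eqP ->|vq|vq].
  - exact: connect0.
  - by apply: (path_connect p1); rewrite inE mem_rcons mem_head orbT.
  - by apply: (path_connect p1); rewrite inE mem_rcons inE vq !orbT.
  - by apply: (path_connect p2); rewrite inE mem_rcons inE vq !orbT.
have child_in c : E v c -> c \in B -> c != h -> c \in q1 ++ q2.
  move=> Evc; rewrite memB !inE => /orP [/eqP cr|]; first by move: (E_acyclic Evc); rewrite cr rv.
  by case/orP => [/eqP ->|//]; rewrite eqxx.
have par1 := block_nonhybrid_parent blockB hB hyb_h c1B c1h Ev1.
have par2 := block_nonhybrid_parent blockB hB hyb_h c2B c2h Ev2.
have c1q := child_in _ Ev1 c1B c1h; have c2q := child_in _ Ev2 c2B c2h.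
case: shape => [q1e|[q2e|[sq1 sq2]]].
- rewrite q1e /= in c1q c2q.
  by move: c12; rewrite (path_parent_eq p2 uq2 c1q c2q par1 par2) eqxx.
- rewrite q2e cats0 in c1q c2q.
  by move: c12; rewrite (path_parent_eq p1 uq1 c1q c2q par1 par2) eqxx.
have side_h q : path E r (rcons q h) -> size q = 1 -> forall c, c \in q -> E c h.
  by case: q => [|x [|]] //= /andP [_ /andP [Exh _]] _ c; rewrite inE => /eqP ->.
have to_h c : c \in q1 ++ q2 -> E c h.
  by rewrite mem_cat => /orP [] cq; [apply: side_h p1 sq1 _ cq | apply: side_h p2 sq2 _ cq].
by split; apply: to_h.
Qed.

Lemma fork_weak_shape v c1 c2 h : fork v c1 c2 h -> c1 = h \/ c2 = h \/ (E c1 h /\ E c2 h).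
Proof.
move=> F; have [Ev1 Ev2 c12 meet] := F; have [c1h c2h _] := meet.
case: (eqVneq c1 h) => [|c1h']; first by left.
case: (eqVneq c2 h) => [|c2h']; first by right; left.
right; right.
have [B [blockB sub]] := biconnected_sub_block (fork_biconnected F).
have vB : v \in B by apply: (subsetP sub); apply: mem_fork_set_root.
have c1B : c1 \in B by apply: (subsetP sub); apply: mem_fork_set1 (connect0 _ _) c1h.
have c2B : c2 \in B by apply: (subsetP sub); apply: mem_fork_set2 (connect0 _ _) c2h.
have hB : h \in B by apply: (subsetP sub); apply: mem_fork_set_meet.
have card3 : 3 <= #|B|.
  have uvc : uniq [:: v; c1; c2].
    by rewrite /= !inE !negb_or (edge_neq E_acyclic Ev1) (edge_neq E_acyclic Ev2) c12.
  rewrite -[3]/(size [:: v; c1; c2]) -(card_uniqP uvc); apply: subset_leq_card.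
  by apply/subsetP => y; rewrite !inE => /or3P [] /eqP ->.
have [r [h0 [q1 [q2 [p1 [p2 [U [defB shape]]]]]]]] := E_weak (conj blockB card3).
have nonempty : (q1 != [::]) || (q2 != [::]).
  apply/norP => -[/negPn/eqP q1e /negPn/eqP q2e]; move: card3.
  by rewrite defB q1e q2e cardsE => /leq_trans /(_ (card_size [:: r; h0])).
have h0h : h0 = h.
  apply: (level1_block_hybrid_eq E_level1 blockB _ hB (weak_cycle_hybrid p1 p2 U nonempty)).
    by rewrite defB !inE eqxx orbT.
  exact: fork_meet_hybrid F.
subst h0.
exact: weak_block_children blockB (fork_meet_hybrid F) p1 p2 U defB shape vB Ev1 Ev2 c12
  c1B c2B c1h' c2h'.
Qed.

End Weak.

End Forks.

(** * A weak level-1 network explains no induced P4 *)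

Lemma pigeonhole_le2 (ka kb kc kd : nat) : ka <= 2 -> kb <= 2 -> kc <= 2 -> kd <= 2 ->
  [|| ka == kb, ka == kc, ka == kd, kb == kc, kb == kd | kc == kd].
Proof.
by case: ka => [|[|[|]]] //; case: kb => [|[|[|]]] //; case: kc => [|[|[|]]] //;
  case: kd => [|[|[|]]].
Qed.

(* A P4 has no module partition with at most three classes and a non-singleton class:
   a vertex distinguishing two members of a class must belong to that class, and along
   the path this absorbs all four vertices. *)
Lemma P4_modules_constant (T : finType) (g : rel T) (k : T -> nat) a b c d :
  let P := [:: a; b; c; d] in
  symmetric g -> g a b -> g b c -> g c d -> ~~ g a c -> ~~ g b d -> ~~ g a d ->
  (forall x, x \in P -> k x <= 2) ->
  (forall x y z, x \in P -> y \in P -> z \in P -> k y = k z -> k x != k y -> g x y = g x z) ->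
  k a = k b /\ k a = k c /\ k a = k d.
Proof.
move=> P gsym gab gbc gcd ngac ngbd ngad k_le2 modules.
have [Pa Pb Pc Pd] : [/\ a \in P, b \in P, c \in P & d \in P] by rewrite !inE !eqxx !orbT.
have absorb x y z : x \in P -> y \in P -> z \in P -> k y = k z -> g x y != g x z -> k x = k y.
  move=> xP yP zP kyz; apply: contraNeq => kxy.
  by rewrite (modules x y z xP yP zP kyz kxy) eqxx.
have [gba gcb gdc] : [/\ g b a, g c b & g d c] by split; rewrite gsym.
have [gca gdb gda] : [/\ g c a = false, g d b = false & g d a = false].
  by split; rewrite gsym; apply/negbTE.
have from_ab : k a = k b -> k a = k b /\ k a = k c /\ k a = k d.
  move=> kab; have kca : k c = k a by apply: absorb Pc Pa Pb kab _; rewrite gca gcb.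
  have kda : k d = k a by apply: absorb Pd Pa Pc (esym kca) _; rewrite gda gdc.
  by [].
have from_cd : k c = k d -> k a = k b /\ k a = k c /\ k a = k d.
  move=> kcd; have kbc : k b = k c by apply: absorb Pb Pc Pd kcd _; rewrite gbc (negbTE ngbd).
  apply: from_ab; apply: absorb Pa Pb Pc kbc _; by rewrite gab (negbTE ngac).
have from_ad : k a = k d -> k a = k b /\ k a = k c /\ k a = k d.
  move=> kad; apply: from_ab; apply/esym.
  by apply: absorb Pb Pa Pd kad _; rewrite gba (negbTE ngbd).
have : [|| k a == k b, k a == k c, k a == k d, k b == k c, k b == k d | k c == k d].
  exact: pigeonhole_le2 (k_le2 a Pa) (k_le2 b Pb) (k_le2 c Pc) (k_le2 d Pd).
case/or3P => [/eqP/from_ab //|/eqP kac|/or4P [/eqP/from_ad //|/eqP kbc|/eqP kbd|/eqP/from_cd //]].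
- apply: from_ad; apply/esym; apply: absorb Pd Pa Pc kac _; by rewrite gda gdc.
- apply: from_ab; apply: absorb Pa Pb Pc kbc _; by rewrite gab (negbTE ngac).
- apply: from_ab; apply: absorb Pa Pb Pd kbd _; by rewrite gab (negbTE ngad).
Qed.

Section ExplainedCograph.
Variables (V : finType) (E : rel V).
Hypotheses (E_acyclic : acyclic E) (indeg_le2 : forall v, indeg E v <= 2).
Hypotheses (E_level1 : level1 E) (E_weak : weak_network E).
Hypothesis E_root : exists rho, forall v, connect E rho v.
Variables (T : finType) (g : rel T) (t : V -> label) (f : T -> V).
Hypotheses (gsym : symmetric g) (f_inj : injective f) (f_leaf : forall a, is_leaf E (f a)).
Hypothesis explains : forall a b, a != b ->
  (g a b <-> exists w, is_lca E (f a) (f b) w /\ t w = L1).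

Lemma splits_adj a b w : a != b -> splits E w (f a) (f b) -> (g a b <-> t w = L1).
Proof.
move=> ab sw; split => [/(explains ab) [w' [lca_w' tw']]|tw].
  by rewrite -(splits_lca_unique E_acyclic indeg_le2 E_level1 E_root sw lca_w').
by apply/(explains ab); exists w; split => //; apply: splits_lca.
Qed.

Lemma leaf_connect v y : is_leaf E v -> connect E v y -> y = v.
Proof.
move=> leaf_v vy; apply/eqP; rewrite eq_sym; apply/negP => /negP vy'.
have [c Evc _] := connect_first_edge vy vy'.
by move: leaf_v; rewrite /is_leaf /outdeg => /eqP /card0_eq /(_ c); rewrite !inE Evc.
Qed.

Section InducedP4.
Variables a b c d : T.
Hypothesis P_uniq : uniq [:: a; b; c; d].
Hypotheses (gab : g a b) (gbc : g b c) (gcd : g c d).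
Hypotheses (ngac : ~~ g a c) (ngbd : ~~ g b d) (ngad : ~~ g a d).

Let P := [:: a; b; c; d].

Lemma splitting_classes_constant (k : T -> nat) (W : nat -> nat -> V) :
  (forall x, x \in P -> k x <= 2) -> (forall i j, W i j = W j i) ->
  (forall p q, p \in P -> q \in P -> k p != k q -> splits E (W (k p) (k q)) (f p) (f q)) ->
  k a = k b /\ k a = k c /\ k a = k d.
Proof.
move=> k_le2 Wsym Wsplits; apply: P4_modules_constant gsym gab gbc gcd ngac ngbd ngad k_le2 _.
move=> x y z xP yP zP kyz kxy; have kxz : k x != k z by rewrite -kyz.
have adj y' : y' \in P -> k x != k y' -> (g x y' <-> t (W (k x) (k y')) = L1).
  by move=> y'P kxy'; apply: splits_adj (Wsplits _ _ xP y'P kxy'); apply: contraNneq kxy' => ->.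
apply/idP/idP => [gxy|gxz].
- by apply/(adj z zP kxz); rewrite -kyz; apply/(adj y yP kxy).
- by apply/(adj y yP kxy); rewrite kyz; apply/(adj z zP kxz).
Qed.

Lemma classes_constant_on_P (k : T -> nat) : k a = k b /\ k a = k c /\ k a = k d ->
  forall p, p \in P -> k p = k a.
Proof. by move=> [kab [kac kad]] p; rewrite !inE => /or4P [] /eqP ->. Qed.

Section BelowLca.
Variable v : V.
Hypothesis v_anc : forall p, p \in P -> connect E v (f p).
Hypothesis v_min : forall w, (forall p, p \in P -> connect E w (f p)) -> connect E v w -> w = v.

Lemma child_not_above_all u : E v u -> exists2 p, p \in P & ~~ connect E u (f p).
Proof.
move=> Evu; have [allu|/allPn [p pP nup]] := boolP (all (fun p => connect E u (f p)) P).
  by move: (Evu); rewrite (v_min (allP allu) (connect1 Evu)) acyclic_irr.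
by exists p.
Qed.

Section Fork.
Variables c1 c2 h : V.
Hypotheses (F : fork E v c1 c2 h) (E1h : E c1 h) (E2h : E c2 h).
Hypothesis cover : forall p, p \in P -> connect E c1 (f p) || connect E c2 (f p).

(* Leaves below [c1] only, below [c2] only, or below both (that is, below [h]) get
   classes [0], [1] and [2]; pairs from classes [0,1], [0,2], [1,2] split at [v], [c1], [c2]. *)
Let k p := if connect E c1 (f p) then (if connect E c2 (f p) then 2 else 0) else 1.
Let W i j := if i + j == 1 then v else if i + j == 2 then c1 else c2.

Let W_splits p q : p \in P -> q \in P -> k p < k q -> splits E (W (k p) (k q)) (f p) (f q).
Proof.
have [Ev1 Ev2 c12 meet] := F; have [c1h c2h _] := meet.
move=> pP qP; rewrite /k /W.
case: (boolP (connect E c1 (f p))) => c1p; case: (boolP (connect E c2 (f p))) => c2p //;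
  case: (boolP (connect E c1 (f q))) => c1q; case: (boolP (connect E c2 (f q))) => c2q //= _.
- exact: (fork_side_splits E_acyclic indeg_le2 E_level1 F).
- split; rewrite ?v_anc // => e Eve; apply/andP => -[ep eq'].
  apply: (three_children E_acyclic indeg_le2 E_level1 Ev1 Eve Ev2).
  + by apply: contraNneq c1q => ->.
  + exact: c12.
  + by apply: contraNneq c2p => <-.
  + by apply/meetsP; exists (f p).
  + by apply/meetsP; exists h.
- by move: (cover qP); rewrite (negbTE c1q) (negbTE c2q).
- exact: (fork_side_splits E_acyclic indeg_le2 E_level1 (forkC F)).
- by move: (cover pP); rewrite (negbTE c1p) (negbTE c2p).
Qed.

Lemma fork_classes_false p0 p1 : p0 \in P -> ~~ connect E c1 (f p0) ->
  p1 \in P -> ~~ connect E c2 (f p1) -> False.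
Proof.
move=> p0P n10 p1P n21.
have Wsym i j : W i j = W j i by rewrite /W addnC.
have k_le2 x : x \in P -> k x <= 2 by rewrite /k; case: ifP => _ //; case: ifP.
have Wsplits p q : p \in P -> q \in P -> k p != k q -> splits E (W (k p) (k q)) (f p) (f q).
  move=> pP qP; rewrite neq_ltn => /orP [lt|lt]; first exact: W_splits.
  by rewrite Wsym; apply: splitsC; apply: W_splits.
have kP := classes_constant_on_P (splitting_classes_constant k_le2 Wsym Wsplits).
have k0 : k p0 = 1 by rewrite /k (negbTE n10).
have k1 : k p1 = 0.
  by move: (cover p1P); rewrite /k (negbTE n21) orbF => ->.
by move: (kP _ p0P) (kP _ p1P); rewrite k0 k1 => <-.
Qed.

End Fork.

Variable ca : V.
Hypotheses (Evca : E v ca) (ca_a : connect E ca (f a)).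

(* The children of [v] fall into groups of at most two that share descendants
   ([three_children]); [below_group p] says that [f p] lies below the group of [ca]. *)
Let below_group p := [exists u, [&& E v u, connect E u (f p) & (u == ca) || meets E u ca]].

Lemma group_splits p q : p \in P -> q \in P -> below_group p -> ~~ below_group q ->
  splits E v (f p) (f q).
Proof.
move=> pP qP /existsP [u /and3P [Evu up gu]] ngq; split; rewrite ?v_anc // => e Eve.
apply/andP => -[ep eq'].
have [eca nmeca] : e != ca /\ ~~ meets E e ca.
  apply/norP; apply: contra ngq => ge; apply/existsP; exists e; by rewrite Eve eq' ge.
have meue : meets E u e by apply/meetsP; exists (f p).
case: (eqVneq u ca) => [uca|uca]; first by move: nmeca; rewrite meetsC -uca meue.
move: gu; rewrite (negbTE uca) /= => meuca.
apply: (three_children E_acyclic indeg_le2 E_level1 Evu Evca Eve uca _ _ meuca meue).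
- by apply: contraNneq nmeca => <-.
- by rewrite eq_sym.
Qed.

Lemma two_groups_false p0 : p0 \in P -> ~~ below_group p0 -> False.
Proof.
move=> p0P n0; pose k p := nat_of_bool (below_group p).
have k_le2 x : x \in P -> k x <= 2 by rewrite /k; case: (below_group x).
have Wsplits p q : p \in P -> q \in P -> k p != k q -> splits E v (f p) (f q).
  rewrite /k => pP qP; case: (boolP (below_group p)); case: (boolP (below_group q)) => //= gq gp _.
  - exact: group_splits.
  - by apply: splitsC; apply: group_splits.
have kP := classes_constant_on_P
  (@splitting_classes_constant k (fun _ _ => v) k_le2 (fun _ _ => erefl) Wsplits).
have ga : below_group a by apply/existsP; exists ca; rewrite Evca ca_a eqxx.
by move: (kP _ p0P); rewrite /k ga (negbTE n0).
Qed.

Lemma one_group_false : {in P, forall p, below_group p} -> False.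
Proof.
move=> allg; have [p0 p0P n0] := child_not_above_all Evca.
have /existsP [c2 /and3P [Evc2 c2p0 gc2]] := allg p0 p0P.
have c2ca : c2 != ca by apply: contraNneq n0 => <-.
have mc2 : meets E ca c2 by rewrite meetsC; move: gc2; rewrite (negbTE c2ca).
have cover p : p \in P -> connect E ca (f p) || connect E c2 (f p).
  move=> pP; have /existsP [u /and3P [Evu up gu]] := allg p pP.
  case: (eqVneq u ca) => [<-|uca]; first by rewrite up.
  case: (eqVneq u c2) => [<-|uc2]; first by rewrite up orbT.
  move: gu; rewrite (negbTE uca) meetsC /= => mu; exfalso.
  apply: (three_children E_acyclic indeg_le2 E_level1 Evca Evc2 Evu _ _ _ mc2 mu);
    by rewrite 1?eq_sym.
have [p1 p1P n1] := child_not_above_all Evc2.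
have /meetsP [y cay c2y] := mc2.
have [h meet _] := ex_first_meet E_acyclic cay c2y.
have F : fork E v ca c2 h by split; rewrite // eq_sym.
have [cah c2h _] := meet.
case: (fork_weak_shape E_acyclic indeg_le2 E_level1 E_weak F) => [cah'|[c2h'|[E1h E2h]]].
- move: (cover p1 p1P); rewrite (negbTE n1) orbF cah' => hp1.
  by move: n1; rewrite (connect_trans c2h hp1).
- move: (cover p0 p0P); rewrite (negbTE n0) /= c2h' => hp0.
  by move: n0; rewrite (connect_trans cah hp0).
- exact: fork_classes_false F E1h E2h cover p0 p1 p0P n0 p1P n1.
Qed.

Lemma below_lca_false : False.
Proof.
have [/allP|/allPn [p0 p0P n0]] := boolP (all below_group P); first exact: one_group_false.
exact: two_groups_false p0P n0.
Qed.

End BelowLca.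

Lemma induced_P4_false : False.
Proof.
have [rho rho_anc] := E_root.
have [v [/allP v_anc _ v_min]] :=
  ex_minimal_desc E_acyclic (Q := fun w => all (fun p => connect E w (f p)) P)
    (introT allP (fun p _ => rho_anc (f p))).
have v_min' w : (forall p, p \in P -> connect E w (f p)) -> connect E v w -> w = v.
  by move=> /allP; apply: v_min.
have [aP bP] : a \in P /\ b \in P by rewrite !inE !eqxx !orbT.
have vfa : v != f a.
  apply/eqP => vfa; move: P_uniq; rewrite /= inE.
  have := v_anc b bP; rewrite vfa => /(leaf_connect (f_leaf a)) /f_inj ->.
  by rewrite eqxx.
have [ca Evca caa] := connect_first_edge (v_anc a aP) vfa.
exact: (below_lca_false v_anc v_min' Evca caa).
Qed.

End InducedP4.

Lemma explained_no_P4 : ~ has_induced_P4 g.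
Proof.
move=> [a [b [c [d [uP [gab [gbc [gcd [ngac [ngbd ngad]]]]]]]]]].
exact: induced_P4_false uP gab gbc gcd ngac ngbd ngad.
Qed.

End ExplainedCograph.

Section NetworkRoot.
Variables (V : finType) (E : rel V).
Hypothesis E_net : is_network E.

Lemma network_indeg_le2 v : indeg E v <= 2.
Proof.
case: E_net => _ [[_ noE]|[_ [_ /(_ v) deg]]].
  by rewrite /indeg eq_card0 // => u; rewrite !inE (negbTE (noE u v)).
by case: deg => [->|[[_ ->]|[[-> _]|[-> _]]]].
Qed.

Lemma network_root : exists rho, forall v, connect E rho v.
Proof.
case: E_net => acyc [[V1 _]|[[r [_ runiq]] _]].
  have /card_gt0P [rho _] : 0 < #|V| by rewrite V1.
  move/card_le1_eqP: (eq_leq V1) => allV.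
  by exists rho => v; rewrite (allV v rho) ?connect0.
exists r => v; have [z [_ zv zmax]] := ex_maximal_anc acyc (Q := predT) (y0 := v) isT.
suff /runiq -> : indeg E z = 0 by [].
apply: eq_card0 => u; rewrite !inE; apply/negP => Euz.
by move: (Euz); rewrite (zmax u isT (connect1 Euz)) (acyclic_irr acyc).
Qed.

End NetworkRoot.

Lemma explained_cograph (T : finType) (g : rel T) : symmetric g ->
  explained_by_weak_level1 g -> cograph g.
Proof.
move=> gsym [n [E [t [f [net [lev [weak [_ [f_inj [_ [f_leaf expl]]]]]]]]]]].
exact: (explained_no_P4 (proj1 net) (network_indeg_le2 net) lev weak (network_root net)
  gsym f_inj f_leaf expl).
Qed.

(** * The cotree of a cograph *)

Section Cotree.
Variables (T : finType) (g : rel T).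

Definition bipartition (S A B : {set T}) :=
  [/\ A :|: B = S, A :&: B = set0, A != set0 & B != set0].

Definition homogeneous (A B : {set T}) :=
  (forall x y, x \in A -> y \in B -> g x y) \/ (forall x y, x \in A -> y \in B -> ~~ g x y).

Lemma setI0_mem (A B : {set T}) z : A :&: B = set0 -> z \in A -> z \in B -> False.
Proof. by move=> AB zA zB; move/setP/(_ z): AB; rewrite !inE zA zB. Qed.

Lemma bipartitionC S A B : bipartition S A B -> bipartition S B A.
Proof. by case=> AB AB0 A0 B0; split; rewrite 1?setUC 1?setIC. Qed.

Lemma bipartition_proper S A B : bipartition S A B -> A \proper S.
Proof.
case=> <- AB0 _ /set0Pn [y yB]; rewrite properE subsetUl /=.
apply/subsetP => /(_ y); rewrite inE yB orbT => /(_ isT) yA.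
by move: AB0 => /setP /(_ y); rewrite !inE yA yB.
Qed.

Hypothesis gsym : symmetric g.

Lemma has_induced_P4_compl : has_induced_P4 (fun u w => ~~ g u w) -> has_induced_P4 g.
Proof.
move=> [a [b [c [d [uP [nab [nbc [ncd [/negPn gac [/negPn gbd /negPn gad]]]]]]]]]].
move: uP; rewrite /= !inE !negb_or => /and4P [/and3P [ab ac ad] /andP [bc bd] cd _].
exists c, a, d, b; split; first by rewrite /= !inE !negb_or eq_sym ac cd eq_sym bc ad ab eq_sym bd.
by rewrite (gsym c a) (gsym d b) (gsym c b).
Qed.

Hypothesis g_noP4 : ~ has_induced_P4 g.

Section Extend.
Variables (B1 B2 : {set T}) (x : T).
Hypotheses (xB1 : x \notin B1) (xB2 : x \notin B2) (B12 : B1 :&: B2 = set0).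
Hypotheses (B1_0 : B1 != set0) (B2_0 : B2 != set0).
Hypothesis apart : forall u w, u \in B1 -> w \in B2 -> ~~ g u w.

Let S := x |: (B1 :|: B2).

Let disjoint_B12 u : u \in B1 -> u \in B2 -> False := setI0_mem B12.

Lemma extend_no_edge : (forall w, w \in B2 -> ~~ g x w) ->
  exists A1 A2, bipartition S A1 A2 /\ homogeneous A1 A2.
Proof.
move=> xB2apart; exists B2, (x |: B1); split; last first.
  by right => u w uB2; rewrite !inE gsym => /orP [/eqP ->|wB1]; [apply: xB2apart | apply: apart].
split => //; last by apply/set0Pn; exists x; rewrite !inE eqxx.
- by rewrite setUCA (setUC B2).
- apply/setP => z; rewrite !inE; case: (eqVneq z x) => [->|_] /=; first by rewrite (negbTE xB2).
  by apply/negbTE/andP => -[zB2 zB1]; apply: (disjoint_B12 zB1 zB2).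
Qed.

(* The non-neighbours of [x] in [B1] form one side, unless one of them is adjacent to a
   neighbour [n] of [x] in [B1], which yields the induced P4 [y - n - x - n2]. *)
Lemma extend_edge y0 n2 : y0 \in B1 -> ~~ g x y0 -> n2 \in B2 -> g x n2 ->
  exists A1 A2, bipartition S A1 A2 /\ homogeneous A1 A2.
Proof.
move=> y0B1 nxy0 n2B2 gxn2; pose Y := [set y in B1 | ~~ g x y].
have [/exists_inP [y yY /exists_inP [n nB1 /andP [gxn gyn]]]|noP4] :=
  boolP [exists y in Y, exists n in B1, g x n && g y n].
  exfalso; apply: g_noP4; move: yY; rewrite inE => /andP [yB1 nxy].
  have neq u w : u \in B1 -> w \in B2 -> u != w.
    move=> uB1 wB2; apply: contraTneq wB2 => <-.
    by apply/negP => uB2; apply: (disjoint_B12 uB1 uB2).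
  have [yx nx] : y != x /\ n != x by split; apply: contraNneq xB1 => <-.
  have xn2 : x != n2 by apply: contraNneq xB2 => ->.
  have yn : y != n by apply: contraNneq nxy => ->.
  exists y, n, x, n2; split; first by rewrite /= !inE !negb_or yn yx nx xn2 !neq.
  by rewrite (gsym n x) (gsym y x) gyn gxn gxn2 nxy !apart.
have YS : Y \subset S by apply/subsetP => z; rewrite !inE => /andP [-> _]; rewrite orbT.
exists Y, (S :\: Y); split.
  split.
  - by rewrite -{1}(setIidPr YS) setID.
  - by rewrite setIDA setDIl setDv set0I.
  - by apply/set0Pn; exists y0; rewrite inE y0B1.
  - by apply/set0Pn; exists x; rewrite !inE eqxx (negbTE xB1).
right => u w; rewrite !inE => /andP [uB1 nxu] /andP [wY /orP [/eqP ->|/orP [wB1|wB2]]].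
- by rewrite gsym.
- move: wY; rewrite wB1 /= negbK => gxw.
  apply: contraNN noP4 => guw; apply/exists_inP; exists u; rewrite ?inE ?uB1 //.
  by apply/exists_inP; exists w; rewrite ?gxw.
- exact: apart.
Qed.

End Extend.

Lemma extend_apart (B1 B2 : {set T}) x : x \notin B1 -> x \notin B2 -> B1 :&: B2 = set0 ->
  B1 != set0 -> B2 != set0 -> (forall u w, u \in B1 -> w \in B2 -> ~~ g u w) ->
  exists A1 A2, bipartition (x |: (B1 :|: B2)) A1 A2 /\ homogeneous A1 A2.
Proof.
move=> xB1 xB2 B12 B1_0 B2_0 apart.
have [/forall_inP xall|/forall_inPn [y0 y0B nxy0]] := boolP [forall y in B1 :|: B2, g x y].
  exists [set x], (B1 :|: B2); split; last by left => u w; rewrite inE => /eqP ->; apply: xall.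
  split => //.
  - apply/setP => z; rewrite !inE; case: (eqVneq z x) => [->|] //=.
    by rewrite (negbTE xB1) (negbTE xB2).
  - by apply/set0Pn; exists x; rewrite inE.
  - by case/set0Pn: B1_0 => y yB1; apply/set0Pn; exists y; rewrite inE yB1.
wlog y0B1 : B1 B2 xB1 xB2 B12 B1_0 B2_0 apart y0B / y0 \in B1.
  move=> wl; case/setUP: (y0B) => [|y0B2]; first exact: wl.
  rewrite (setUC B1); apply: (wl B2 B1); rewrite 1?setIC 1?(setUC B2) //.
  by move=> u w uB2 wB1; rewrite gsym; apply: apart.
have [/exists_inP [n2 n2B2 gxn2]|noedge] := boolP [exists n2 in B2, g x n2].
  exact: extend_edge y0B1 nxy0 n2B2 gxn2.
apply: extend_no_edge => // w wB2.
by apply: contraNN noedge => gxw; apply/exists_inP; exists w.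
Qed.

End Cotree.

(* Seinsche: a cograph on at least two vertices, or its complement, is disconnected. *)
Lemma cograph_bipartition (T : finType) (g : rel T) : symmetric g -> ~ has_induced_P4 g ->
  forall S : {set T}, 2 <= #|S| -> exists A B, bipartition S A B /\ homogeneous g A B.
Proof.
move=> gsym nP4 S; have [n] := ubnP #|S|; elim: n S => // n IH S ltS S2.
have [/eqP/cards2P [x [y [xy ->]]]|S3] := eqVneq #|S| 2.
  exists [set x], [set y]; split.
    split; rewrite // -?card_gt0 ?cards1 //.
    by apply/setP => z; rewrite !inE; apply/andP => -[/eqP -> /eqP yz]; rewrite yz eqxx in xy.
  rewrite /homogeneous; case: (boolP (g x y)) => gxy; [left|right] => u w;
    by rewrite !inE => /eqP -> /eqP ->.
have [x xS] : exists x, x \in S by apply/card_gt0P; apply: leq_trans S2.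
have Sx2 : 2 <= #|S :\ x| by move: S2 S3; rewrite (cardsD1 x S) xS; lia.
have ltSx : #|S :\ x| < n by move: ltS; rewrite (cardsD1 x S) xS; lia.
have [B1 [B2 [[defSx B12 B1_0 B2_0] hom]]] := IH (S :\ x) ltSx Sx2.
have [xB1 xB2] : x \notin B1 /\ x \notin B2.
  by split; apply/negP => xB; have := setD11 x S; rewrite -defSx inE xB ?orbT.
rewrite -(setD1K xS) -defSx.
case: hom => [joined|apart]; last exact: extend_apart.
have ncsym : symmetric (fun u w => ~~ g u w) by move=> u w; rewrite gsym.
have ncnP4 : ~ has_induced_P4 (fun u w => ~~ g u w) by move/(has_induced_P4_compl gsym).
have [A1 [A2 [bip hom]]] := extend_apart ncsym ncnP4 xB1 xB2 B12 B1_0 B2_0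
  (fun u w uB1 wB2 => introT negPn (joined u w uB1 wB2)).
exists A1, A2; split => //; case: hom => hom; [right|left] => u w uA1 wA2;
  by move: (hom u w uA1 wA2); rewrite ?negbK.
Qed.

Section Hierarchy.
Variables (T : finType) (g : rel T).

(* The cotree of a cograph on [S], as the laminar family of the vertex sets of its
   subtrees; every non-leaf set is split into two members that are joined or apart. *)
Record hierarchy (S : {set T}) (H : {set {set T}}) : Prop := Hierarchy {
  hier_top : S \in H;
  hier_sub : forall A, A \in H -> A \subset S;
  hier_leaf : forall x, x \in S -> [set x] \in H;
  hier_neq0 : forall A, A \in H -> A != set0;
  hier_laminar : forall A B, A \in H -> B \in H -> [\/ A \subset B, B \subset A | A :&: B = set0];
  hier_split : forall A, A \in H -> 2 <= #|A| ->
    exists A1 A2, [/\ A1 \in H, A2 \in H, bipartition A A1 A2 & homogeneous g A1 A2] }.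

Lemma hierarchy1 x : hierarchy [set x] [set [set x]].
Proof.
split => [|A|y|A|A B|A]; rewrite ?inE //.
- by move=> /eqP ->.
- by move=> /eqP ->.
- by move=> /eqP ->; rewrite -card_gt0 cards1.
- by move=> /eqP -> /eqP ->; constructor 1.
- by move=> /eqP ->; rewrite cards1.
Qed.

Lemma hierarchyU S A1 A2 H1 H2 : bipartition S A1 A2 -> homogeneous g A1 A2 ->
  hierarchy A1 H1 -> hierarchy A2 H2 -> hierarchy S (S |: (H1 :|: H2)).
Proof.
move=> bip hom h1 h2; have [defS A12 A1_0 A2_0] := bip.
have sub1 A : A \in H1 -> A \subset S.
  by move/(hier_sub h1)/subset_trans; apply; rewrite -defS subsetUl.
have sub2 A : A \in H2 -> A \subset S.
  by move/(hier_sub h2)/subset_trans; apply; rewrite -defS subsetUr.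
have disj A B : A \in H1 -> B \in H2 -> A :&: B = set0.
  move=> /(hier_sub h1) sA /(hier_sub h2) sB; apply/eqP; rewrite -subset0 -A12.
  exact: setISS.
split.
- by rewrite !inE eqxx.
- by move=> A; rewrite !inE => /or3P [/eqP ->|/sub1|/sub2].
- move=> x; rewrite -defS inE => /orP [/(hier_leaf h1)|/(hier_leaf h2)] Hx;
    by rewrite !inE Hx ?orbT.
- move=> A; rewrite !inE => /or3P [/eqP ->|/(hier_neq0 h1)|/(hier_neq0 h2)] //.
  by rewrite -defS; apply: contraNneq A1_0 => /eqP; rewrite setU_eq0 => /andP [].
- move=> A B; rewrite !inE => /or3P [/eqP ->|HA|HA] /or3P [/eqP ->|HB|HB].
  + by constructor 1.
  + by constructor 2; apply: sub1.
  + by constructor 2; apply: sub2.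
  + by constructor 1; apply: sub1.
  + exact: (hier_laminar h1 HA HB).
  + by constructor 3; apply: disj.
  + by constructor 1; apply: sub2.
  + by constructor 3; rewrite setIC; apply: disj.
  + exact: (hier_laminar h2 HA HB).
- move=> A; rewrite !inE => /or3P [/eqP ->|HA|HA] A2card.
  + by exists A1, A2; rewrite !inE (hier_top h1) (hier_top h2) !orbT.
  + have [B1 [B2 [HB1 HB2 bipB homB]]] := hier_split h1 HA A2card.
    by exists B1, B2; rewrite !inE HB1 HB2 !orbT.
  + have [B1 [B2 [HB1 HB2 bipB homB]]] := hier_split h2 HA A2card.
    by exists B1, B2; rewrite !inE HB1 HB2 !orbT.
Qed.

Hypotheses (gsym : symmetric g) (g_noP4 : ~ has_induced_P4 g).

Lemma cograph_hierarchy (S : {set T}) : S != set0 -> exists H, hierarchy S H.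
Proof.
have [n] := ubnP #|S|; elim: n S => // n IH S ltS S0.
have [S2|S1] := leqP 2 #|S|; last first.
  have /cards1P [x ->] : #|S| == 1 by rewrite eqn_leq -ltnS S1 card_gt0.
  by exists [set [set x]]; apply: hierarchy1.
have [A1 [A2 [bip hom]]] := cograph_bipartition gsym g_noP4 S2.
have [_ _ A1_0 A2_0] := bip.
have ltn_sub (A : {set T}) : A \proper S -> #|A| < n by move=> AS; have := proper_card AS; lia.
have [H1 h1] := IH A1 (ltn_sub _ (bipartition_proper bip)) A1_0.
have [H2 h2] := IH A2 (ltn_sub _ (bipartition_proper (bipartitionC bip))) A2_0.
by exists (S |: (H1 :|: H2)); apply: hierarchyU bip hom h1 h2.
Qed.

End Hierarchy.

Section CotreeNetwork.
Variables (T : finType) (g : rel T) (H : {set {set T}}).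
Hypothesis gsym : symmetric g.
Hypothesis hH : hierarchy g setT H.

Definition cluster (i : 'I_#|H|) : {set T} := enum_val i.
Definition vertex_of (A : {set T}) : 'I_#|H| := enum_rank_in (hier_top hH) A.

Lemma cluster_in i : cluster i \in H. Proof. exact: enum_valP. Qed.
Lemma cluster_inj : injective cluster. Proof. exact: enum_val_inj. Qed.
Lemma vertex_ofK A : A \in H -> cluster (vertex_of A) = A. Proof. exact: enum_rankK_in. Qed.
Lemma clusterK i : vertex_of (cluster i) = i. Proof. exact: enum_valK_in. Qed.

Lemma cluster_neq0 i : cluster i != set0. Proof. exact: (hier_neq0 hH (cluster_in i)). Qed.

Definition child_cluster (A B : {set T}) :=
  (B \proper A) && [forall C in H, ~~ ((B \proper C) && (C \proper A))].

Definition cotree_edge (i j : 'I_#|H|) := child_cluster (cluster i) (cluster j).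

Lemma proper_sub_part (A A1 A2 C : {set T}) : A1 \in H -> A2 \in H -> bipartition A A1 A2 ->
  C \in H -> C \proper A -> C \subset A1 \/ C \subset A2.
Proof.
move=> H1 H2 [defA A12 A1_0 A2_0] HC /andP [CA nAC].
have CA12 z : z \in C -> z \in A1 \/ z \in A2 by move/(subsetP CA); rewrite -defA => /setUP.
case: (hier_laminar hH HC H1) => [|A1C|CA1]; first by left.
- case: (hier_laminar hH HC H2) => [|A2C|CA2]; first by right.
  + by move: nAC; rewrite -defA subUset A1C A2C.
  + left; apply/subsetP => z zC; case: (CA12 z zC) => // zA2.
    by case: (setI0_mem CA2 zC zA2).
- right; apply/subsetP => z zC; case: (CA12 z zC) => // zA1.
  by case: (setI0_mem CA1 zC zA1).
Qed.

Lemma child_cluster_split (A A1 A2 : {set T}) : A1 \in H -> A2 \in H -> bipartition A A1 A2 ->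
  child_cluster A A1.
Proof.
move=> H1 H2 bip; rewrite /child_cluster (bipartition_proper bip) /=.
apply/forall_inP => C HC; apply/negP => /andP [A1C CA].
have [_ A12 /set0Pn [y yA1] _] := bip.
case: (proper_sub_part H1 H2 bip HC CA) => CA'.
- by move: A1C; rewrite properE CA' andbF.
- by apply: (setI0_mem A12 yA1); apply: (subsetP CA'); apply: (subsetP (proper_sub A1C)).
Qed.

Lemma cotree_edge_proper i j : cotree_edge i j -> cluster j \proper cluster i.
Proof. by case/andP. Qed.

Lemma cotree_edge_split i A1 A2 : A1 \in H -> A2 \in H -> bipartition (cluster i) A1 A2 ->
  cotree_edge i (vertex_of A1).
Proof. by move=> H1 H2 bip; rewrite /cotree_edge vertex_ofK //; apply: child_cluster_split bip. Qed.

Lemma connect_cotree_sub i j : connect cotree_edge i j -> cluster j \subset cluster i.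
Proof.
move/connectP => [p + ->]; elim: p i => [|k p IH] i /=; first by rewrite subxx.
by case/andP => /cotree_edge_proper /proper_sub ik /IH lk; apply: subset_trans lk ik.
Qed.

Lemma cotree_acyclic : acyclic cotree_edge.
Proof.
move=> i j /cotree_edge_proper; rewrite properE => /andP [_].
by apply: contra => /connect_cotree_sub.
Qed.

(* Descend from [i] through the part of the split that contains [j]. *)
Lemma sub_connect_cotree i j : cluster j \subset cluster i -> connect cotree_edge i j.
Proof.
have [n] := ubnP #|cluster i|; elim: n i => // n IH i lti ji.
have [eji|nji] := eqVneq (cluster j) (cluster i); first by rewrite (cluster_inj eji) connect0.
have ltji : cluster j \proper cluster i by rewrite properEneq nji.
have i2 : 2 <= #|cluster i|.
  have := proper_card ltji; have := cluster_neq0 j; rewrite -card_gt0; lia.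
have [A1 [A2 [H1 H2 bip _]]] := hier_split hH (cluster_in i) i2.
have step B1 B2 : B1 \in H -> B2 \in H -> bipartition (cluster i) B1 B2 -> cluster j \subset B1 ->
    connect cotree_edge i j.
  move=> HB1 HB2 bipB jB1; apply: connect_trans (connect1 (cotree_edge_split HB1 HB2 bipB)) _.
  apply: IH; rewrite vertex_ofK //.
  by have := proper_card (bipartition_proper bipB); lia.
case: (proper_sub_part H1 H2 bip (cluster_in j) ltji) => jA.
- exact: step bip jA.
- exact: step (bipartitionC bip) jA.
Qed.

Lemma connect_cotree i j : connect cotree_edge i j = (cluster j \subset cluster i).
Proof. by apply/idP/idP; [apply: connect_cotree_sub | apply: sub_connect_cotree]. Qed.

Lemma cotree_indeg_le1 j : indeg cotree_edge j <= 1.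
Proof.
apply/card_le1_eqP => i1 i2; rewrite !inE.
move=> /andP [ji1 /forall_inP max1] /andP [ji2 /forall_inP max2].
apply: cluster_inj; have /set0Pn [z zj] := cluster_neq0 j.
have zi k : cluster j \proper cluster k -> z \in cluster k by move/proper_sub/subsetP; apply.
case: (hier_laminar hH (cluster_in i1) (cluster_in i2)) => [s12|s21|d12].
- apply/eqP; apply: contraT => n12; move: (max2 _ (cluster_in i1)).
  by rewrite ji1 properEneq eq_sym n12 s12.
- apply/eqP; apply: contraT => n12; move: (max1 _ (cluster_in i2)).
  by rewrite ji2 properEneq n12 s21.
- by case: (setI0_mem d12 (zi _ ji1) (zi _ ji2)).
Qed.

Lemma cotree_indeg_eq0 j : (indeg cotree_edge j == 0) = (cluster j == setT).
Proof.
apply/idP/eqP => [/eqP /card0_eq indeg0|jT].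
  apply/eqP; apply: contraT => jT.
  have rootT : cluster (vertex_of setT) = setT by rewrite vertex_ofK ?(hier_top hH).
  have rj : connect cotree_edge (vertex_of setT) j by rewrite connect_cotree rootT subsetT.
  have rj' : vertex_of setT != j by apply: contraNneq jT => <-; rewrite rootT.
  have [k _ Ekj] := connect_last_edge rj rj'.
  by move: (indeg0 k); rewrite !inE Ekj.
apply/eqP/eq_card0 => i; rewrite !inE; apply/negP => /cotree_edge_proper.
by rewrite jT properE subsetT andbF.
Qed.

Lemma cotree_outdeg_ge2 i : 2 <= #|cluster i| -> 2 <= outdeg cotree_edge i.
Proof.
move=> i2; have [A1 [A2 [H1 H2 bip _]]] := hier_split hH (cluster_in i) i2.
have E1 := cotree_edge_split H1 H2 bip; have E2 := cotree_edge_split H2 H1 (bipartitionC bip).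
have n12 : vertex_of A1 != vertex_of A2.
  apply/eqP => /(congr1 cluster); rewrite !vertex_ofK // => A12.
  by case: bip => _; rewrite A12 setIid => ->; rewrite eqxx.
have : #|[set vertex_of A1; vertex_of A2]| <= outdeg cotree_edge i.
  by apply: subset_leq_card; apply/subsetP => k; rewrite !inE => /orP [] /eqP ->.
by rewrite cards2 n12.
Qed.

Lemma cotree_leafE i : is_leaf cotree_edge i = (#|cluster i| == 1).
Proof.
have i1 : 0 < #|cluster i| by rewrite card_gt0 cluster_neq0.
apply/idP/eqP => [leaf_i|ci1].
  move: leaf_i; rewrite /is_leaf => /eqP out0.
  apply/eqP; rewrite eqn_leq i1 andbT leqNgt; apply/negP => /cotree_outdeg_ge2.
  by rewrite out0.
apply/eqP/eq_card0 => j; rewrite !inE; apply/negP => /cotree_edge_proper /proper_card.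
by rewrite ci1 ltnS leqn0 cards_eq0 (negbTE (cluster_neq0 j)).
Qed.

(* [x] and [y] lie in [A] but in no smaller cluster, i.e. [A] is the cluster of their lca. *)
Definition separated (A : {set T}) x y :=
  [forall C in H, (C \proper A) ==> ~~ ((x \in C) && (y \in C))].

(* A non-leaf is labelled by the adjacency of any pair it separates. *)
Definition cotree_label i : label :=
  if #|cluster i| == 1 then Lodot
  else if [exists x, exists y,
            [&& x \in cluster i, y \in cluster i, separated (cluster i) x y & g x y]]
  then L1 else L0.

Definition leaf_of (a : T) : 'I_#|H| := vertex_of [set a].

Lemma cluster_leaf_of a : cluster (leaf_of a) = [set a].
Proof. exact: (vertex_ofK (hier_leaf hH (in_setT a))). Qed.

Lemma connect_leaf_of w a : connect cotree_edge w (leaf_of a) = (a \in cluster w).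
Proof. by rewrite connect_cotree cluster_leaf_of sub1set. Qed.

Lemma separated_split (A A1 A2 : {set T}) x y : A1 \in H -> A2 \in H -> bipartition A A1 A2 ->
  x \in A -> y \in A -> separated A x y -> (x \in A1 /\ y \in A2) \/ (x \in A2 /\ y \in A1).
Proof.
move=> H1 H2 bip xA yA /forall_inP sep; have [defA _ _ _] := bip.
have P1 := bipartition_proper bip; have P2 := bipartition_proper (bipartitionC bip).
move: xA yA; rewrite -defA !inE => /orP [x1|x2] /orP [y1|y2]; try by [left|right].
- by move: (sep A1 H1); rewrite P1 x1 y1.
- by move: (sep A2 H2); rewrite P2 x2 y2.
Qed.

Lemma label_separated w a b : a != b -> a \in cluster w -> b \in cluster w ->
  separated (cluster w) a b -> (cotree_label w = L1 <-> g a b).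
Proof.
move=> ab aw bw sab.
have w2 : 2 <= #|cluster w|.
  have : #|[set a; b]| <= #|cluster w|.
    by apply: subset_leq_card; apply/subsetP => z; rewrite !inE => /orP [] /eqP ->.
  by rewrite cards2 ab.
have [A1 [A2 [H1 H2 bip hom]]] := hier_split hH (cluster_in w) w2.
have cross x y : x \in cluster w -> y \in cluster w -> separated (cluster w) x y ->
    (x \in A1 /\ y \in A2) \/ (y \in A1 /\ x \in A2).
  move=> xw yw sxy; case: (separated_split H1 H2 bip xw yw sxy); first by left.
  by case=> ? ?; right.
have not1 : (#|cluster w| == 1) = false by apply/negbTE; rewrite neq_ltn w2 orbT.
rewrite /cotree_label not1; case: hom => [joined|apart].
  have gab : g a b by case: (cross a b aw bw sab) => -[? ?]; [|rewrite gsym]; apply: joined.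
  have -> : [exists x, exists y,
      [&& x \in cluster w, y \in cluster w, separated (cluster w) x y & g x y]] = true.
    by apply/existsP; exists a; apply/existsP; exists b; rewrite aw bw sab gab.
  by [].
have ngxy x y : x \in cluster w -> y \in cluster w -> separated (cluster w) x y -> ~~ g x y.
  by move=> xw yw sxy; case: (cross x y xw yw sxy) => -[? ?]; [|rewrite gsym]; apply: apart.
have -> : [exists x, exists y,
    [&& x \in cluster w, y \in cluster w, separated (cluster w) x y & g x y]] = false.
  apply/negbTE/existsP => -[x /existsP [y /and4P [xw yw sxy gxy]]].
  by move: (ngxy x y xw yw sxy); rewrite gxy.
by rewrite (negbTE (ngxy a b aw bw sab)).
Qed.

Lemma lca_separated a b w : is_lca cotree_edge (leaf_of a) (leaf_of b) w ->
  [/\ a \in cluster w, b \in cluster w & separated (cluster w) a b].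
Proof.
move=> [aw [bw wmin]]; rewrite !connect_leaf_of in aw bw; split => //.
apply/forall_inP => C HC; apply/implyP => Cw; apply/negP => /andP [aC bC].
have Cw' : C \subset cluster w by case/andP: Cw.
have := wmin (vertex_of C); rewrite !connect_leaf_of connect_cotree !vertex_ofK //.
move=> /(_ aC bC Cw') Ew.
by move: Cw; rewrite -Ew vertex_ofK // properE subxx andbF.
Qed.

Lemma ex_cotree_lca a b : exists w, is_lca cotree_edge (leaf_of a) (leaf_of b) w.
Proof.
have rootT : cluster (vertex_of setT) = setT by rewrite vertex_ofK ?(hier_top hH).
have Q0 : (a \in cluster (vertex_of setT)) && (b \in cluster (vertex_of setT)).
  by rewrite rootT !inE.
have [w [/andP [aw bw] _ wmin]] :=
  ex_minimal_desc cotree_acyclic (Q := fun w => (a \in cluster w) && (b \in cluster w)) Q0.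
exists w; rewrite /is_lca !connect_leaf_of aw bw; split => //; split => // w'.
by rewrite !connect_leaf_of => aw' bw'; apply: wmin; rewrite aw'.
Qed.

Lemma cotree_explains a b : a != b ->
  (g a b <-> exists w, is_lca cotree_edge (leaf_of a) (leaf_of b) w /\ cotree_label w = L1).
Proof.
move=> ab; split => [gab|[w [lca_w lw]]].
  have [w lca_w] := ex_cotree_lca a b; have [aw bw sw] := lca_separated lca_w.
  by exists w; split => //; apply/(label_separated ab aw bw sw).
by have [aw bw sw] := lca_separated lca_w; apply/(label_separated ab aw bw sw).
Qed.

Lemma cotree_network : is_network cotree_edge.
Proof.
split; first exact: cotree_acyclic.
have [T1|T2] := leqP #|T| 1.
  have HT A : A \in H -> A = setT.
    move=> HA; have /set0Pn [y yA] := hier_neq0 hH HA.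
    by apply/setP => z; rewrite inE; move/card_le1_eqP: T1 => /(_ y z) ->.
  left; split.
    rewrite card_ord (_ : H = [set setT]) ?cards1 //.
    by apply/setP => A; rewrite inE; apply/idP/eqP => [/HT|->] //; apply: (hier_top hH).
  move=> u v; apply/negP => /cotree_edge_proper.
  by rewrite (HT _ (cluster_in u)) (HT _ (cluster_in v)) properE subxx andbF.
right; split; [|split].
- exists (vertex_of setT); split.
    by apply/eqP; rewrite cotree_indeg_eq0 vertex_ofK ?(hier_top hH).
  by move=> x /eqP; rewrite cotree_indeg_eq0 => /eqP <-; rewrite clusterK.
- move=> r /eqP; rewrite cotree_indeg_eq0 => /eqP Er.
  by apply: cotree_outdeg_ge2; rewrite Er cardsT.
- move=> v; have [vT|vT] := eqVneq (cluster v) setT.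
    by left; apply/eqP; rewrite cotree_indeg_eq0 vT.
  have indeg1 : indeg cotree_edge v = 1.
    by apply/eqP; rewrite eqn_leq cotree_indeg_le1 lt0n cotree_indeg_eq0.
  have [v1|v1] := eqVneq #|cluster v| 1.
    by right; left; split => //; apply/eqP; rewrite -/(is_leaf _ _) cotree_leafE v1.
  right; right; left; split => //; apply: cotree_outdeg_ge2.
  by move: v1 (cluster_neq0 v); rewrite -card_gt0; lia.
Qed.

Lemma cotree_level1 : level1 cotree_edge.
Proof.
move=> S _; rewrite (_ : [set v in S | is_hybrid cotree_edge v] = set0) ?cards0 //.
apply/setP => v; rewrite !inE /is_hybrid.
by have := cotree_indeg_le1 v; case: (indeg cotree_edge v) => [|[|]] //; rewrite andbF.
Qed.

Lemma cotree_weak : weak_network cotree_edge.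
Proof. by move=> S /(indeg_le1_no_cycle cotree_acyclic cotree_indeg_le1). Qed.

End CotreeNetwork.

Lemma cograph_explained (T : finType) (g : rel T) : 0 < #|T| -> symmetric g -> cograph g ->
  explained_by_weak_level1 g.
Proof.
move=> T0 gsym nP4; have T0' : [set: T] != set0 by rewrite -card_gt0 cardsT.
have [H hH] := cograph_hierarchy gsym nP4 T0'.
exists #|H|, (@cotree_edge T H), (cotree_label g (H := H)), (leaf_of hH).
split; first exact: (cotree_network hH).
split; first exact: (cotree_level1 hH).
split; first exact: (cotree_weak hH).
split.
  move=> v; rewrite (cotree_leafE hH) /cotree_label.
  by case: ifP => // _; split => //; case: ifP.
split.
  by move=> a b /(congr1 (@cluster _ H)); rewrite !(cluster_leaf_of hH); apply: set1_inj.
split.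
  move=> v; rewrite (cotree_leafE hH) => /cards1P [a va]; exists a.
  by apply: cluster_inj; rewrite (cluster_leaf_of hH) va.
split; first by move=> a; rewrite (cotree_leafE hH) (cluster_leaf_of hH) cards1.
by move=> a b ab; apply: cotree_explains gsym hH a b ab.
Qed.

Theorem mainTheorem4 (T : finType) (g : rel T) :
  0 < #|T| -> simple_graph g ->
  (cograph g <-> explained_by_weak_level1 g).
Proof.
move=> T0 [gsym _]; split; [exact: cograph_explained | exact: explained_cograph].
Qed.
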